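(* For a paratopological group $H$ the following are equivalent: (a) $H$ is $\flat$-separated; (b) $H$ is a subgroup of a saturated paratopological group; (c) $H$ is a $\flat$-closed subgroup of a saturated paratopological group.
   Context: All topological spaces are Hausdorff. A paratopological group is a group with a Hausdorff topology making multiplication continuous. $G$ is saturated if $U^{-1}$ has nonempty interior for every nonempty open $U\subset G$. For a paratopological group $(G,\tau)$, $\tau^\flat$ is the strongest group topology on $G$ weaker than $\tau$ and $G^\flat=(G,\tau^\flat)$; $G$ is $\flat$-separated if $G^\flat$ is Hausdorff; a subset is $\flat$-closed if it is closed in $\tau^\flat$. ''Subgroup'' means subgroup with the induced topology (up to topological isomorphism). *)

From Stdlib Require Import Classical.

Set Implicit Arguments.

Definition subset {T : Type} (A B : T -> Prop) : Prop := forall x, A x -> B x.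

Definition is_topology {T : Type} (O : (T -> Prop) -> Prop) : Prop :=
  O (fun _ => True) /\
  (forall (F : (T -> Prop) -> Prop),
      (forall U, F U -> O U) -> O (fun x => exists U, F U /\ U x)) /\
  (forall U V, O U -> O V -> O (fun x => U x /\ V x)).

Definition hausdorff {T : Type} (O : (T -> Prop) -> Prop) : Prop :=
  forall x y, x <> y ->
    exists U V, O U /\ O V /\ U x /\ V y /\ (forall z, U z -> V z -> False).

Definition is_group {G : Type} (mul : G -> G -> G) (one : G) (inv : G -> G) : Prop :=
  (forall x y z, mul x (mul y z) = mul (mul x y) z) /\
  (forall x, mul one x = x) /\ (forall x, mul x one = x) /\
  (forall x, mul (inv x) x = one) /\ (forall x, mul x (inv x) = one).

Definition mul_continuous {G : Type} (mul : G -> G -> G) (O : (G -> Prop) -> Prop) : Prop :=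
  forall x y W, O W -> W (mul x y) ->
    exists U V, O U /\ O V /\ U x /\ V y /\ (forall u v, U u -> V v -> W (mul u v)).

Definition inv_continuous {G : Type} (inv : G -> G) (O : (G -> Prop) -> Prop) : Prop :=
  forall W, O W -> O (fun x => W (inv x)).

Record ParaTopGroup : Type := {
  carrier :> Type;
  gmul : carrier -> carrier -> carrier;
  gone : carrier;
  ginv : carrier -> carrier;
  gopen : (carrier -> Prop) -> Prop;
  group_ax : is_group gmul gone ginv;
  top_ax : is_topology gopen;
  haus_ax : hausdorff gopen;
  mul_cont_ax : mul_continuous gmul gopen
}.

Definition saturated (G : ParaTopGroup) : Prop :=
  forall U, gopen G U -> (exists x, U x) ->
    exists V, gopen G V /\ (exists y, V y) /\
      subset V (fun y => exists x, U x /\ y = ginv G x).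

Definition group_topology (G : ParaTopGroup) (s : (G -> Prop) -> Prop) : Prop :=
  is_topology s /\ mul_continuous (gmul G) s /\ inv_continuous (ginv G) s.

(* tau^flat: the strongest group topology weaker than tau, realised as the
   topology generated by all group topologies contained in tau (i.e. the
   smallest topology containing each of them). *)
Definition flat_open (G : ParaTopGroup) (U : G -> Prop) : Prop :=
  forall O : (G -> Prop) -> Prop, is_topology O ->
    (forall s, group_topology G s -> subset s (gopen G) -> subset s O) -> O U.

Definition flat_separated (G : ParaTopGroup) : Prop := hausdorff (flat_open G).

Definition flat_closed (G : ParaTopGroup) (A : G -> Prop) : Prop :=
  flat_open G (fun x => ~ A x).

Definition embedding (H G : ParaTopGroup) (f : H -> G) : Prop :=
  (forall x y, f (gmul H x y) = gmul G (f x) (f y)) /\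
  (forall x y, f x = f y -> x = y) /\
  (forall U, gopen H U <-> exists V, gopen G V /\ (forall x, U x <-> V (f x))).

(* If G is saturated, the sets U U^-1, U an open neighbourhood of the identity, form a
   neighbourhood base of a Hausdorff group topology coarser than that of G: saturation
   is what makes V V^-1 V V^-1 fit into U U^-1 for small V.  This topology induces a
   Hausdorff group topology coarser than the given one on every subgroup H, so H^flat is
   Hausdorff.
   Conversely, if H^flat is Hausdorff, give H × R the group topology whose neighbourhoods
   of the identity are (U × {0}) ∪ (W × (0, t)), with U open around e in H and W a
   neighbourhood of e in H^flat; Hausdorffness of H^flat separates points with equal real
   part.  H embeds as H × {0}; the inverse of a basic neighbourhood contains a translate
   of another one, hence has interior; and H × {0} is closed already in the coarser group
   topology pulled back from R along the second projection. *)
From Stdlib Require Import Reals Lra FunctionalExtensionality PropExtensionality.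

Section GroupTheory.
Context {G : Type} {mul : G -> G -> G} {one : G} {inv : G -> G}.
Hypothesis HG : is_group mul one inv.

Lemma mulgA x y z : mul x (mul y z) = mul (mul x y) z.
Proof. apply HG. Qed.
Lemma mul1g x : mul one x = x.
Proof. apply HG. Qed.
Lemma mulg1 x : mul x one = x.
Proof. apply HG. Qed.
Lemma mulVg x : mul (inv x) x = one.
Proof. apply HG. Qed.
Lemma mulgV x : mul x (inv x) = one.
Proof. apply HG. Qed.

Lemma mulKg x y : mul (inv x) (mul x y) = y.
Proof. rewrite mulgA, mulVg, mul1g; reflexivity. Qed.
Lemma mulKVg x y : mul x (mul (inv x) y) = y.
Proof. rewrite mulgA, mulgV, mul1g; reflexivity. Qed.
Lemma mulgK x y : mul (mul y x) (inv x) = y.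
Proof. rewrite <- mulgA, mulgV, mulg1; reflexivity. Qed.
Lemma mulgKV x y : mul (mul y (inv x)) x = y.
Proof. rewrite <- mulgA, mulVg, mulg1; reflexivity. Qed.

Lemma mulgI x y z : mul x y = mul x z -> y = z.
Proof. intro E. rewrite <- (mulKg x y), E, mulKg. reflexivity. Qed.
Lemma invg_unique x y : mul x y = one -> y = inv x.
Proof. intro E. apply (mulgI x). rewrite E, mulgV. reflexivity. Qed.
Lemma invgK x : inv (inv x) = x.
Proof. symmetry. apply invg_unique, mulVg. Qed.
Lemma invg1 : inv one = one.
Proof. symmetry. apply invg_unique, mul1g. Qed.
Lemma invgM x y : inv (mul x y) = mul (inv y) (inv x).
Proof.
  symmetry. apply invg_unique. rewrite <- mulgA, (mulgA y), mulgV, mul1g, mulgV.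
  reflexivity.
Qed.
End GroupTheory.

Section Homomorphism.
Context {A B : Type} {mulA : A -> A -> A} {oneA : A} {invA : A -> A}
  {mulB : B -> B -> B} {oneB : B} {invB : B -> B}.
Hypotheses (HA : is_group mulA oneA invA) (HB : is_group mulB oneB invB).
Variable f : A -> B.
Hypothesis fM : forall x y, f (mulA x y) = mulB (f x) (f y).

Lemma morph1 : f oneA = oneB.
Proof. apply (mulgI HB (f oneA)). rewrite <- fM, (mul1g HA), (mulg1 HB). reflexivity. Qed.
Lemma morphV x : f (invA x) = invB (f x).
Proof. apply (invg_unique HB). rewrite <- fM, (mulgV HA). exact morph1. Qed.
End Homomorphism.

Section TopologyFacts.
Context {T : Type} {O : (T -> Prop) -> Prop}.
Hypothesis HO : is_topology O.

Lemma open_setT : O (fun _ => True).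
Proof. apply HO. Qed.
Lemma open_setI U V : O U -> O V -> O (fun x => U x /\ V x).
Proof. apply HO. Qed.
Lemma open_bigcup (F : (T -> Prop) -> Prop) :
  (forall U, F U -> O U) -> O (fun x => exists U, F U /\ U x).
Proof. apply HO. Qed.

Lemma open_of_nbhd (S : T -> Prop) :
  (forall x, S x -> exists V, O V /\ V x /\ forall z, V z -> S z) -> O S.
Proof.
  intro hS.
  replace S with (fun x => exists U, (O U /\ forall z, U z -> S z) /\ U x).
  - apply open_bigcup. tauto.
  - apply functional_extensionality; intro x; apply propositional_extensionality.
    split.
    + intros [U [[_ hU] hx]]. auto.
    + intro hx. destruct (hS x hx) as [V [hV [hVx hVS]]]. exists V; auto.
Qed.

Context {mul : T -> T -> T}.
Hypothesis Hmul : mul_continuous mul O.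

Lemma open_mull g U : O U -> O (fun z => U (mul g z)).
Proof.
  intro hU. apply open_of_nbhd. intros z hz.
  destruct (Hmul g z U hU hz) as [A [B [_ [hB [hg [hz' hAB]]]]]].
  exists B. auto.
Qed.
Lemma open_mulr g U : O U -> O (fun z => U (mul z g)).
Proof.
  intro hU. apply open_of_nbhd. intros z hz.
  destruct (Hmul z g U hU hz) as [A [B [hA [_ [hz' [hg hAB]]]]]].
  exists A. auto.
Qed.
Lemma open_mullr g h U : O U -> O (fun z => U (mul (mul g z) h)).
Proof. intro hU. apply (open_mull g (fun w => U (mul w h))), open_mulr, hU. Qed.
End TopologyFacts.

Definition induced {A B : Type} (f : A -> B) (O : (B -> Prop) -> Prop) (S : A -> Prop) : Prop :=
  exists V, O V /\ forall x, S x <-> V (f x).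

Section InducedTopology.
Context {A B : Type} (f : A -> B) {O : (B -> Prop) -> Prop}.

Lemma induced_preimage V : O V -> induced f O (fun x => V (f x)).
Proof. intro hV. exists V. split; tauto. Qed.

Lemma induced_topology : is_topology O -> is_topology (induced f O).
Proof.
  intro HO. split; [|split].
  - apply (induced_preimage (fun _ => True)), (open_setT HO).
  - intros F hF.
    exists (fun z => exists V, (O V /\ exists S, F S /\ forall x, S x <-> V (f x)) /\ V z).
    split.
    + apply (open_bigcup HO). intros V [hV _]. exact hV.
    + intro x. split.
      * intros [S [hS hSx]]. destruct (hF S hS) as [V [hV hVS]].
        exists V. split; [split; [exact hV | exists S; auto]|]. apply hVS, hSx.
      * intros [V [[_ [S [hS hVS]]] hVx]]. exists S. split; [exact hS | apply hVS, hVx].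
  - intros U V [U' [hU' hUU]] [V' [hV' hVV]]. exists (fun z => U' z /\ V' z).
    split; [apply (open_setI HO); auto|]. intro x. rewrite hUU, hVV. tauto.
Qed.

Lemma induced_hausdorff :
  (forall x y, f x = f y -> x = y) -> hausdorff O -> hausdorff (induced f O).
Proof.
  intros finj HO x y hxy.
  assert (hf : f x <> f y) by (intro E; apply hxy, finj, E).
  destruct (HO _ _ hf) as [P [Q [hP [hQ [hPx [hQy hPQ]]]]]].
  exists (fun z => P (f z)), (fun z => Q (f z)).
  repeat split; try apply induced_preimage; auto.
  intros z hPz hQz. exact (hPQ _ hPz hQz).
Qed.

Lemma induced_sub O' : subset O O' -> subset (induced f O) (induced f O').
Proof. intros hOO' S [V [hV hS]]. exists V. auto. Qed.

Context {mulA : A -> A -> A} {mulB : B -> B -> B}.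
Hypothesis fM : forall x y, f (mulA x y) = mulB (f x) (f y).

Lemma induced_mul_continuous : mul_continuous mulB O -> mul_continuous mulA (induced f O).
Proof.
  intros HM x y W [W' [hW' hWW]] hxy. apply hWW in hxy. rewrite fM in hxy.
  destruct (HM _ _ _ hW' hxy) as [P [Q [hP [hQ [hPx [hQy hPQ]]]]]].
  exists (fun z => P (f z)), (fun z => Q (f z)).
  repeat split; try apply induced_preimage; auto.
  intros u v hu hv. apply hWW. rewrite fM. auto.
Qed.

Context {invA : A -> A} {invB : B -> B}.
Hypothesis fV : forall x, f (invA x) = invB (f x).

Lemma induced_inv_continuous : inv_continuous invB O -> inv_continuous invA (induced f O).
Proof.
  intros HI W [W' [hW' hWW]]. exists (fun z => W' (invB z)). split; [apply HI, hW'|].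
  intro x. rewrite hWW, fV. tauto.
Qed.
End InducedTopology.

Section NeighbourhoodBase.
Context {G : Type} (mul : G -> G -> G) {one : G} (inv : G -> G).
Hypothesis HG : is_group mul one inv.
Context {I : Type} (base : I -> Prop) (nbhd : I -> G -> Prop).

Definition base_open (S : G -> Prop) : Prop :=
  forall p, S p -> exists i, base i /\ forall n, nbhd i n -> S (mul p n).

(* The interior of [p * nbhd i]. *)
Definition base_interior (p : G) (i : I) (q : G) : Prop :=
  exists j, base j /\ forall n, nbhd j n -> nbhd i (mul (inv p) (mul q n)).

Hypothesis nbhd_one : forall i, base i -> nbhd i one.
Hypothesis nbhd_meet : forall i j, base i -> base j ->
  exists k, base k /\ forall z, nbhd k z -> nbhd i z /\ nbhd j z.
Hypothesis base_inhabited : exists i, base i.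
Hypothesis nbhd_mul : forall i, base i ->
  exists j, base j /\ forall a b, nbhd j a -> nbhd j b -> nbhd i (mul a b).
Hypothesis nbhd_conj : forall i, base i -> forall g,
  exists j, base j /\ forall a, nbhd j a -> nbhd i (mul (mul g a) (inv g)).
Hypothesis nbhd_inv : forall i, base i ->
  exists j, base j /\ forall a, nbhd j a -> nbhd i (inv a).
Hypothesis nbhd_separates : forall x y, x <> y ->
  exists i, base i /\ forall a b, nbhd i a -> nbhd i b -> mul x a <> mul y b.

Lemma base_open_topology : is_topology base_open.
Proof.
  split; [|split].
  - intros p _. destruct base_inhabited as [i hi]. exists i. auto.
  - intros F hF p [U [hFU hUp]]. destruct (hF U hFU p hUp) as [i [hi hU]].
    exists i. split; [exact hi|]. intros n hn. exists U. auto.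
  - intros U V hU hV p [hUp hVp].
    destruct (hU p hUp) as [i [hi hUi]], (hV p hVp) as [j [hj hVj]].
    destruct (nbhd_meet i j hi hj) as [k [hk hkij]].
    exists k. split; [exact hk|]. intros n hn. destruct (hkij n hn). auto.
Qed.

Lemma base_interior_open p i : base i -> base_open (base_interior p i).
Proof.
  intros hi q [j [hj hq]]. destruct (nbhd_mul j hj) as [k [hk hjk]].
  exists k. split; [exact hk|]. intros m hm. exists k. split; [exact hk|].
  intros n hn. rewrite <- (mulgA HG q m n). apply hq, hjk; assumption.
Qed.
Lemma base_interior_self p i : base i -> base_interior p i p.
Proof. intro hi. exists i. split; [exact hi|]. intros n hn. rewrite (mulKg HG). exact hn. Qed.
Lemma base_interior_sub p i q : base_interior p i q -> nbhd i (mul (inv p) q).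
Proof. intros [j [hj hq]]. rewrite <- (mulg1 HG q). apply hq, nbhd_one, hj. Qed.

Lemma base_open_mul_continuous : mul_continuous mul base_open.
Proof.
  intros x y W hW hxy. destruct (hW _ hxy) as [i [hi hWi]].
  destruct (nbhd_mul i hi) as [i1 [hi1 hmul]].
  destruct (nbhd_conj i1 hi1 (inv y)) as [i2 [hi2 hconj]].
  destruct (nbhd_meet i1 i2 hi1 hi2) as [i3 [hi3 hmeet]].
  exists (base_interior x i3), (base_interior y i1).
  repeat split; try apply base_interior_open; try apply base_interior_self; auto.
  intros a b ha hb. apply base_interior_sub in ha, hb.
  apply hmeet, proj2, hconj in ha. rewrite (invgK HG) in ha.
  pose proof (hmul _ _ ha hb) as hab.
  replace (mul (mul (mul (inv y) (mul (inv x) a)) y) (mul (inv y) b))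
    with (mul (inv (mul x y)) (mul a b)) in hab.
  - apply hWi in hab. rewrite (mulKVg HG) in hab. exact hab.
  - rewrite <- (mulgA HG _ y), (mulKVg HG), (invgM HG), <- !(mulgA HG). reflexivity.
Qed.

Lemma base_open_inv_continuous : inv_continuous inv base_open.
Proof.
  intros W hW x hx. destruct (hW _ hx) as [i [hi hWi]].
  destruct (nbhd_conj i hi x) as [j [hj hconj]], (nbhd_inv j hj) as [k [hk hinv]].
  exists k. split; [exact hk|]. intros n hn.
  pose proof (hWi _ (hconj _ (hinv _ hn))) as hW'.
  rewrite (mulgA HG), (mulKg HG) in hW'. rewrite (invgM HG). exact hW'.
Qed.

Lemma base_open_hausdorff : hausdorff base_open.
Proof.
  intros x y hxy. destruct (nbhd_separates x y hxy) as [i [hi hsep]].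
  exists (base_interior x i), (base_interior y i).
  repeat split; try apply base_interior_open; try apply base_interior_self; auto.
  intros z hx hy. apply base_interior_sub in hx, hy.
  apply (hsep _ _ hx hy). rewrite !(mulKVg HG). reflexivity.
Qed.
End NeighbourhoodBase.

Section SaturatedGroup.
Variable G : ParaTopGroup.
Hypothesis G_saturated : saturated G.
Let HG := group_ax G.
Let HT := top_ax G.
Let HM := mul_cont_ax G.
Notation mul := (gmul G).
Notation inv := (ginv G).
Notation e := (gone G).

Definition open_nbhd1 (U : G -> Prop) : Prop := gopen G U /\ U e.
Definition mulV_set (U : G -> Prop) (z : G) : Prop :=
  exists a b, U a /\ U b /\ z = mul a (inv b).

Lemma mulV_set_one U : open_nbhd1 U -> mulV_set U e.
Proof. intros [_ hU]. exists e, e. rewrite (mulgV HG). auto. Qed.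

Lemma mulV_set_meet U V : open_nbhd1 U -> open_nbhd1 V ->
  exists W, open_nbhd1 W /\ forall z, mulV_set W z -> mulV_set U z /\ mulV_set V z.
Proof.
  intros [hU hUe] [hV hVe]. exists (fun x => U x /\ V x).
  split; [split; [apply (open_setI HT)|]; auto|].
  intros z [a [b [[haU haV] [[hbU hbV] ->]]]]. split; exists a, b; auto.
Qed.

Lemma open_nbhd1_inhabited : exists U, open_nbhd1 U.
Proof. exists (fun _ => True). split; [apply (open_setT HT)|exact I]. Qed.

Lemma mulV_set_inv U z : mulV_set U z -> mulV_set U (inv z).
Proof.
  intros [a [b [ha [hb ->]]]]. exists b, a. repeat split; auto.
  rewrite (invgM HG), (invgK HG). reflexivity.
Qed.

Lemma mulV_set_conj U : open_nbhd1 U -> forall g, exists V, open_nbhd1 V /\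
  forall a, mulV_set V a -> mulV_set U (mul (mul g a) (inv g)).
Proof.
  intros [hU hUe] g. exists (fun z => U (mul (mul g z) (inv g))). split.
  - split; [apply (open_mullr HT HM), hU|]. rewrite (mulg1 HG), (mulgV HG). exact hUe.
  - intros z [a [b [ha [hb ->]]]].
    exists (mul (mul g a) (inv g)), (mul (mul g b) (inv g)). repeat split; auto.
    rewrite !(invgM HG), (invgK HG), <- !(mulgA HG), (mulKg HG). reflexivity.
Qed.

(* Saturation provides [V] open with [V ⊆ W^-1]; shrinking [U] into [y0^-1 V] makes
   the inner factor [a2^-1 b1] of [(a1 a2^-1) (b1 b2^-1)] a product [x1 x2^-1] with
   [x1, x2 ∈ W], which is then absorbed into the outer factors. *)
Lemma mulV_set_mul U : open_nbhd1 U -> exists V, open_nbhd1 V /\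
  forall a b, mulV_set V a -> mulV_set V b -> mulV_set U (mul a b).
Proof.
  intros [hU hUe].
  assert (hee : U (mul e e)) by (rewrite (mul1g HG); exact hUe).
  destruct (HM e e U hU hee) as [A [B [hA [hB [hAe [hBe hAB]]]]]].
  set (W := fun x => A x /\ B x).
  assert (hW : gopen G W) by (apply (open_setI HT); auto).
  destruct (G_saturated W hW (ex_intro _ e (conj hAe hBe)))
    as [V [hV [[y0 hy0] hVW]]].
  exists (fun z => V (mul y0 z) /\ W z). split.
  - split; [apply (open_setI HT); [apply (open_mull HT HM), hV | exact hW]|].
    rewrite (mulg1 HG). split; [exact hy0|split; assumption].
  - intros a b [a1 [a2 [[_ ha1] [[ha2 _] ->]]]] [b1 [b2 [[hb1 _] [[_ hb2] ->]]]].
    destruct (hVW _ ha2) as [x1 [hx1 E1]], (hVW _ hb1) as [x2 [hx2 E2]].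
    exists (mul a1 x1), (mul b2 x2).
    split; [apply hAB; [apply ha1|apply hx1]|].
    split; [apply hAB; [apply hb2|apply hx2]|].
    replace a2 with (mul (inv y0) (inv x1)) by (rewrite <- E1, (mulKg HG); reflexivity).
    replace b1 with (mul (inv y0) (inv x2)) by (rewrite <- E2, (mulKg HG); reflexivity).
    rewrite !(invgM HG), !(invgK HG), <- !(mulgA HG), (mulKVg HG). reflexivity.
Qed.

Lemma mulV_set_separates x y : x <> y -> exists U, open_nbhd1 U /\
  forall a b, mulV_set U a -> mulV_set U b -> mul x a <> mul y b.
Proof.
  intro hxy. destruct (@haus_ax G x y hxy) as [P [Q [hP [hQ [hPx [hQy hPQ]]]]]].
  set (U := fun z => P (mul x z) /\ Q (mul y z)).
  assert (hU : open_nbhd1 U).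
  { split; [apply (open_setI HT); apply (open_mull HT HM); assumption|].
    unfold U. rewrite !(mulg1 HG). auto. }
  destruct (mulV_set_mul U hU) as [V [hV hVU]].
  exists V. split; [exact hV|]. intros a b ha hb E.
  apply mulV_set_inv in hb.
  destruct (hVU _ _ ha hb) as [u [v [[hu _] [[_ hv] Euv]]]].
  assert (E' : mul x (mul a (inv b)) = y) by (rewrite (mulgA HG), E, (mulgK HG); reflexivity).
  rewrite Euv, (mulgA HG) in E'. apply (hPQ (mul x u)); [exact hu|].
  rewrite <- (mulgKV HG v (mul x u)), E'. exact hv.
Qed.

Definition sat_open : (G -> Prop) -> Prop := base_open mul open_nbhd1 mulV_set.

Lemma sat_group_topology : group_topology G sat_open.
Proof.
  split; [|split].
  - apply base_open_topology; [exact mulV_set_meet | exact open_nbhd1_inhabited].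
  - apply (base_open_mul_continuous _ _ HG).
    + exact mulV_set_one.
    + exact mulV_set_meet.
    + exact mulV_set_mul.
    + exact mulV_set_conj.
  - apply (base_open_inv_continuous _ _ HG).
    + exact mulV_set_conj.
    + intros U hU. exists U. split; [exact hU | apply mulV_set_inv].
Qed.

Lemma sat_open_hausdorff : hausdorff sat_open.
Proof.
  apply (base_open_hausdorff _ _ HG).
  - exact mulV_set_one.
  - exact mulV_set_mul.
  - exact mulV_set_separates.
Qed.

Lemma sat_open_sub : subset sat_open (gopen G).
Proof.
  intros S hS. apply (open_of_nbhd HT). intros p hp.
  destruct (hS p hp) as [U [[hU hUe] hpU]].
  exists (fun z => U (mul (inv p) z)).
  split; [apply (open_mull HT HM), hU|]. split; [rewrite (mulVg HG); exact hUe|].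
  intros z hz. rewrite <- (mulKVg HG p z). apply hpU.
  exists (mul (inv p) z), e. rewrite (invg1 HG), (mulg1 HG). auto.
Qed.
End SaturatedGroup.

Lemma flat_open_of_group_topology (H : ParaTopGroup) (s : (H -> Prop) -> Prop) :
  group_topology H s -> subset s (gopen H) -> subset s (flat_open H).
Proof. intros hs hsub U hU O _ hO. exact (hO s hs hsub U hU). Qed.

Lemma flat_separated_of_group_topology (H : ParaTopGroup) (s : (H -> Prop) -> Prop) :
  group_topology H s -> subset s (gopen H) -> hausdorff s -> flat_separated H.
Proof.
  intros hs hsub hsep x y hxy. destruct (hsep x y hxy) as [P [Q [hP [hQ hPQ]]]].
  exists P, Q. split; [|split]; try exact hPQ;
    apply (flat_open_of_group_topology H s hs hsub); assumption.
Qed.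

Lemma flat_separated_of_saturated_embedding (H G : ParaTopGroup) (f : H -> G) :
  saturated G -> embedding H G f -> flat_separated H.
Proof.
  intros G_sat [fM [finj fopen]].
  pose proof (sat_group_topology G G_sat) as [hT [hM hI]].
  apply (flat_separated_of_group_topology H (induced f (sat_open G))).
  - split; [|split].
    + apply induced_topology, hT.
    + apply (induced_mul_continuous f fM hM).
    + exact (induced_inv_continuous f (morphV (group_ax H) (group_ax G) f fM) hI).
  - intros U hU. apply fopen. exact (induced_sub f _ (sat_open_sub G) U hU).
  - apply induced_hausdorff; [exact finj|exact (sat_open_hausdorff G G_sat)].
Qed.

Section FlatNeighbourhoods.
Variable H : ParaTopGroup.
Let HG := group_ax H.
Let HT := top_ax H.
Notation mul := (gmul H).
Notation inv := (ginv H).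
Notation e := (gone H).

(* A neighbourhood base of [e] in [H^flat]: finite intersections of neighbourhoods of
   [e] in group topologies coarser than that of [H]. *)
Inductive flat_nbhd : (H -> Prop) -> Prop :=
| flat_nbhdT : flat_nbhd (fun _ => True)
| flat_nbhd_group s V : group_topology H s -> subset s (gopen H) -> s V -> V e ->
    flat_nbhd V
| flat_nbhdI W1 W2 : flat_nbhd W1 -> flat_nbhd W2 -> flat_nbhd (fun x => W1 x /\ W2 x).

Lemma flat_nbhd_one W : flat_nbhd W -> W e.
Proof. induction 1; auto. Qed.

Lemma flat_nbhd_open W : flat_nbhd W -> gopen H W.
Proof.
  induction 1 as [| s V _ hsub hV _ |].
  - exact (open_setT HT).
  - exact (hsub V hV).
  - apply (open_setI HT); assumption.
Qed.

Lemma flat_nbhd_mul W : flat_nbhd W ->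
  exists W', flat_nbhd W' /\ forall a b, W' a -> W' b -> W (mul a b).
Proof.
  induction 1 as [| s V hs hsub hV hVe | W1 W2 _ [A [hA hA1]] _ [B [hB hB2]]].
  - exists (fun _ => True). split; [constructor | auto].
  - destruct hs as [sT [sM sI]].
    assert (hee : V (mul e e)) by (rewrite (mul1g HG); exact hVe).
    destruct (sM _ _ _ hV hee) as [P [Q [hP [hQ [hPe [hQe hPQ]]]]]].
    exists (fun x => P x /\ Q x). split.
    + apply (flat_nbhd_group s); try split; auto. apply (open_setI sT); assumption.
    + intros a b [ha _] [_ hb]. auto.
  - exists (fun x => A x /\ B x). split; [constructor; assumption|].
    intros a b [? ?] [? ?]. auto.
Qed.

Lemma flat_nbhd_conj W : flat_nbhd W -> forall g,
  exists W', flat_nbhd W' /\ forall a, W' a -> W (mul (mul g a) (inv g)).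
Proof.
  induction 1 as [| s V hs hsub hV hVe | W1 W2 _ IH1 _ IH2]; intro g.
  - exists (fun _ => True). split; [constructor | auto].
  - pose proof hs as [sT [sM _]].
    exists (fun z => V (mul (mul g z) (inv g))). split; [|auto].
    apply (flat_nbhd_group s); auto.
    + apply (open_mullr sT sM), hV.
    + rewrite (mulg1 HG), (mulgV HG). exact hVe.
  - destruct (IH1 g) as [A [hA hA1]], (IH2 g) as [B [hB hB2]].
    exists (fun x => A x /\ B x). split; [constructor; assumption|].
    intros a [? ?]. auto.
Qed.

Lemma flat_nbhd_inv W : flat_nbhd W ->
  exists W', flat_nbhd W' /\ forall a, W' a -> W (inv a).
Proof.
  induction 1 as [| s V hs hsub hV hVe | W1 W2 _ [A [hA hA1]] _ [B [hB hB2]]].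
  - exists (fun _ => True). split; [constructor | auto].
  - pose proof hs as [_ [_ sI]].
    exists (fun z => V (inv z)). split; [|auto].
    apply (flat_nbhd_group s); auto. rewrite (invg1 HG). exact hVe.
  - exists (fun x => A x /\ B x). split; [constructor; assumption|].
    intros a [? ?]. auto.
Qed.

(* [flat_open] is the least topology containing the coarser group topologies, and the
   sets that are neighbourhoods of each of their points form such a topology. *)
Lemma flat_open_nbhd P : flat_open H P ->
  forall a, P a -> exists W, flat_nbhd W /\ forall w, W w -> P (mul a w).
Proof.
  intro hP. apply hP.
  - split; [|split].
    + intros a _. exists (fun _ => True). split; [constructor | auto].
    + intros F hF a [U [hU hUa]]. destruct (hF U hU a hUa) as [W [hW hWU]].
      exists W. split; [exact hW|]. intros w hw. exists U. auto.
    + intros U V hU hV a [hUa hVa].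
      destruct (hU a hUa) as [A [hA hAU]], (hV a hVa) as [B [hB hBV]].
      exists (fun x => A x /\ B x). split; [constructor; assumption|].
      intros w [? ?]. auto.
  - intros s hs hsub V hV a hVa. pose proof hs as [sT [sM _]].
    exists (fun z => V (mul a z)). split; [|auto].
    apply (flat_nbhd_group s); auto.
    + apply (open_mull sT sM), hV.
    + rewrite (mulg1 HG). exact hVa.
Qed.
End FlatNeighbourhoods.

Section RealLine.
Local Open Scope R_scope.

Definition real_open (S : R -> Prop) : Prop :=
  forall x, S x -> exists d, 0 < d /\ forall y, Rabs (y - x) < d -> S y.

Lemma real_open_ball c r : real_open (fun x => Rabs (x - c) < r).
Proof.
  intros x hx. exists (r - Rabs (x - c)). split; [lra|].
  intros y hy. pose proof (Rabs_triang (y - x) (x - c)).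
  replace (y - x + (x - c)) with (y - c) in * by ring. lra.
Qed.

Lemma real_open_topology : is_topology real_open.
Proof.
  split; [|split].
  - intros x _. exists 1. split; [lra | auto].
  - intros F hF x [U [hU hUx]]. destruct (hF U hU x hUx) as [d [hd hdU]].
    exists d. split; [exact hd|]. intros y hy. exists U. auto.
  - intros U V hU hV x [hUx hVx].
    destruct (hU x hUx) as [d1 [hd1 h1]], (hV x hVx) as [d2 [hd2 h2]].
    exists (Rmin d1 d2). split; [apply Rmin_pos; assumption|].
    pose proof (Rmin_l d1 d2); pose proof (Rmin_r d1 d2).
    intros y hy. split; [apply h1 | apply h2]; lra.
Qed.

Lemma real_open_plus_continuous : mul_continuous Rplus real_open.
Proof.
  intros x y W hW hxy. destruct (hW _ hxy) as [d [hd hdW]].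
  exists (fun u => Rabs (u - x) < d / 2), (fun v => Rabs (v - y) < d / 2).
  repeat split; try apply real_open_ball.
  - unfold Rminus. rewrite Rplus_opp_r, Rabs_R0. lra.
  - unfold Rminus. rewrite Rplus_opp_r, Rabs_R0. lra.
  - intros u v hu hv. apply hdW. pose proof (Rabs_triang (u - x) (v - y)).
    replace (u - x + (v - y)) with (u + v - (x + y)) in * by ring. lra.
Qed.

Lemma real_open_opp_continuous : inv_continuous Ropp real_open.
Proof.
  intros W hW x hx. destruct (hW _ hx) as [d [hd hdW]].
  exists d. split; [exact hd|]. intros y hy. apply hdW.
  replace (- y - - x) with (- (y - x)) by ring. rewrite Rabs_Ropp. exact hy.
Qed.
End RealLine.

Section Extension.
Variable H : ParaTopGroup.
Hypothesis H_flat_separated : flat_separated H.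
Let HG := group_ax H.
Let HT := top_ax H.
Let HM := mul_cont_ax H.
Notation mul := (gmul H).
Notation inv := (ginv H).
Notation e := (gone H).
Local Open Scope R_scope.

Definition ext_mul (p q : H * R) : H * R := (mul (fst p) (fst q), snd p + snd q).
Definition ext_one : H * R := (e, 0).
Definition ext_inv (p : H * R) : H * R := (inv (fst p), - snd p).

Lemma ext_group : is_group ext_mul ext_one ext_inv.
Proof.
  unfold ext_mul, ext_one, ext_inv. split; [|split; [|split; [|split]]].
  - intros [a r] [b s] [c t]; simpl. rewrite (mulgA HG), Rplus_assoc. reflexivity.
  - intros [a r]; simpl. rewrite (mul1g HG), Rplus_0_l. reflexivity.
  - intros [a r]; simpl. rewrite (mulg1 HG), Rplus_0_r. reflexivity.
  - intros [a r]; simpl. rewrite (mulVg HG), Rplus_opp_l. reflexivity.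
  - intros [a r]; simpl. rewrite (mulgV HG), Rplus_opp_r. reflexivity.
Qed.

Record ext_index := ExtIndex { open_part : H -> Prop; flat_part : H -> Prop; width : R }.

Definition ext_base (i : ext_index) : Prop :=
  gopen H (open_part i) /\ open_part i e /\ flat_nbhd H (flat_part i) /\ 0 < width i.
Definition ext_nbhd (i : ext_index) (z : H * R) : Prop :=
  (snd z = 0 /\ open_part i (fst z)) \/ (0 < snd z < width i /\ flat_part i (fst z)).

Lemma ext_nbhd_one i : ext_base i -> ext_nbhd i ext_one.
Proof. intros [_ [hU _]]. left. auto. Qed.

Lemma ext_base_inhabited : exists i, ext_base i.
Proof.
  exists (ExtIndex (fun _ => True) (fun _ => True) 1).
  repeat split; [apply (open_setT HT) | constructor | simpl; lra].
Qed.

Lemma ext_nbhd_meet i j : ext_base i -> ext_base j ->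
  exists k, ext_base k /\ forall z, ext_nbhd k z -> ext_nbhd i z /\ ext_nbhd j z.
Proof.
  destruct i as [U W t], j as [U' W' t'].
  intros [hU [hUe [hW ht]]] [hU' [hU'e [hW' ht']]]; simpl in *.
  exists (ExtIndex (fun x => U x /\ U' x) (fun x => W x /\ W' x) (Rmin t t')).
  split.
  - repeat split; simpl; auto.
    + apply (open_setI HT); assumption.
    + constructor; assumption.
    + apply Rmin_pos; assumption.
  - pose proof (Rmin_l t t'); pose proof (Rmin_r t t').
    intro z; unfold ext_nbhd; simpl.
    intros [[? [? ?]] | [[? ?] [? ?]]]; split; [left | left | right | right];
      repeat split; auto; lra.
Qed.

Lemma ext_nbhd_mul i : ext_base i ->
  exists j, ext_base j /\ forall a b, ext_nbhd j a -> ext_nbhd j b -> ext_nbhd i (ext_mul a b).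
Proof.
  destruct i as [U W t]. intros [hU [hUe [hW ht]]]; simpl in *.
  assert (hee : U (mul e e)) by (rewrite (mul1g HG); exact hUe).
  destruct (HM e e U hU hee) as [A [B [hA [hB [hAe [hBe hAB]]]]]].
  destruct (flat_nbhd_mul H W hW) as [W1 [hW1 hW1W]].
  exists (ExtIndex (fun x => (A x /\ B x) /\ W1 x) W1 (t / 2)). split.
  - repeat split; simpl; auto.
    + apply (open_setI HT); [apply (open_setI HT) | apply flat_nbhd_open]; assumption.
    + apply flat_nbhd_one, hW1.
    + lra.
  - intros [a r] [b s]; unfold ext_nbhd, ext_mul; simpl.
    intros [[-> [[ha _] ha1]] | [hr ha1]] [[-> [[_ hb] hb1]] | [hs hb1]];
      [left | right | right | right]; split; auto; lra.
Qed.

Lemma ext_nbhd_conj i : ext_base i -> forall g,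
  exists j, ext_base j /\ forall a, ext_nbhd j a -> ext_nbhd i (ext_mul (ext_mul g a) (ext_inv g)).
Proof.
  destruct i as [U W t]. intros [hU [hUe [hW ht]]] [h r]; simpl in *.
  destruct (flat_nbhd_conj H W hW h) as [W1 [hW1 hW1W]].
  exists (ExtIndex (fun z => U (mul (mul h z) (inv h))) W1 t). split.
  - repeat split; simpl; auto.
    + apply (open_mullr HT HM), hU.
    + rewrite (mulg1 HG), (mulgV HG). exact hUe.
  - intros [a s]; unfold ext_nbhd, ext_mul, ext_inv; simpl.
    replace (r + s + - r) with s by ring.
    intros [[-> ha] | [hs ha]]; [left | right]; auto.
Qed.

(* Points with the same real part are separated by a [flat_nbhd]: this is the only
   place where [H^flat] must be Hausdorff. *)
Lemma ext_nbhd_separates x y : x <> y ->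
  exists i, ext_base i /\ forall a b, ext_nbhd i a -> ext_nbhd i b -> ext_mul x a <> ext_mul y b.
Proof.
  destruct x as [a t], y as [b s]. intro hxy. destruct (Req_dec t s) as [<- | hts].
  - assert (hab : a <> b) by (intro E; apply hxy; rewrite E; reflexivity).
    destruct (H_flat_separated a b hab) as [P [Q [hP [hQ [hPa [hQb hPQ]]]]]].
    destruct (flat_open_nbhd H P hP a hPa) as [WP [hWP hWPP]].
    destruct (flat_open_nbhd H Q hQ b hQb) as [WQ [hWQ hWQQ]].
    set (W := fun x => WP x /\ WQ x).
    assert (hW : flat_nbhd H W) by (constructor; assumption).
    exists (ExtIndex W W 1). split.
    + split; [|split; [|split]]; simpl;
        [apply flat_nbhd_open, hW | apply flat_nbhd_one, hW | exact hW | lra].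
    + intros [c r] [c' r']; unfold ext_nbhd, ext_mul; simpl. intros hc hc' E.
      injection E as E _.
      assert (hWc : W c) by (destruct hc as [[_ ?] | [_ ?]]; assumption).
      assert (hWc' : W c') by (destruct hc' as [[_ ?] | [_ ?]]; assumption).
      apply (hPQ (mul a c)); [apply hWPP, hWc | rewrite E; apply hWQQ, hWc'].
  - exists (ExtIndex (fun _ => True) (fun _ => True) (Rabs (t - s))). split.
    + repeat split; simpl; [apply (open_setT HT) | constructor |].
      apply Rabs_pos_lt. lra.
    + intros [c r] [c' r']; unfold ext_nbhd, ext_mul; simpl. intros hc hc' E.
      injection E as _ E.
      assert (0 <= r < Rabs (t - s)) by (destruct hc as [[-> _] | [? _]]; [split; [lra | apply Rabs_pos_lt; lra] | lra]).
      assert (0 <= r' < Rabs (t - s)) by (destruct hc' as [[-> _] | [? _]]; [split; [lra | apply Rabs_pos_lt; lra] | lra]).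
      revert E. unfold Rabs in *. destruct (Rcase_abs (t - s)); lra.
Qed.

Definition ext_open : (H * R -> Prop) -> Prop := base_open ext_mul ext_base ext_nbhd.

Lemma ext_open_topology : is_topology ext_open.
Proof. apply base_open_topology; [exact ext_nbhd_meet | exact ext_base_inhabited]. Qed.

Lemma ext_open_mul_continuous : mul_continuous ext_mul ext_open.
Proof.
  apply (base_open_mul_continuous _ _ ext_group).
  - exact ext_nbhd_one.
  - exact ext_nbhd_meet.
  - exact ext_nbhd_mul.
  - exact ext_nbhd_conj.
Qed.

Lemma ext_open_hausdorff : hausdorff ext_open.
Proof.
  apply (base_open_hausdorff _ _ ext_group).
  - exact ext_nbhd_one.
  - exact ext_nbhd_mul.
  - exact ext_nbhd_separates.
Qed.

Definition extension : ParaTopGroup :=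
  {| carrier := H * R; gmul := ext_mul; gone := ext_one; ginv := ext_inv;
     gopen := ext_open; group_ax := ext_group; top_ax := ext_open_topology;
     haus_ax := ext_open_hausdorff; mul_cont_ax := ext_open_mul_continuous |}.

(* With [m := (e, -t/2)], the translate [m * ext_nbhd j] lies in [W1 × [-t/2, 0)], so
   its inverse lies in [W0 × (0, t/2]]. *)
Lemma ext_nbhd_inv_translate i : ext_base i -> exists m j, ext_base j /\
  forall q, ext_nbhd j (ext_mul (ext_inv m) q) -> ext_nbhd i (ext_inv q).
Proof.
  destruct i as [U W t]. intros [_ [_ [hW ht]]]; simpl in *.
  destruct (flat_nbhd_inv H W hW) as [W1 [hW1 hW1W]].
  exists (e, - (t / 2)), (ExtIndex W1 W1 (t / 2)). split.
  - repeat split; simpl; [apply flat_nbhd_open | apply flat_nbhd_one | | lra]; exact hW1.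
  - intros [c r]; unfold ext_nbhd, ext_mul, ext_inv; simpl.
    rewrite (invg1 HG), (mul1g HG).
    intros [[hr hc] | [hr hc]]; right; split; [lra | apply hW1W, hc | lra | apply hW1W, hc].
Qed.

Lemma extension_saturated : saturated extension.
Proof.
  intros U hU [p hp]. destruct (hU p hp) as [i [hi hpU]].
  destruct (ext_nbhd_inv_translate i hi) as [m [j [hj hmj]]].
  set (V := base_interior ext_mul ext_inv ext_base ext_nbhd m j).
  exists (fun z => V (ext_mul z p)). split; [|split].
  - apply (open_mulr ext_open_topology ext_open_mul_continuous).
    apply (base_interior_open _ _ ext_group); [exact ext_nbhd_mul | exact hj].
  - exists (ext_mul m (ext_inv p)). rewrite (mulgKV ext_group).
    apply (base_interior_self _ _ ext_group), hj.
  - intros z hz. apply (base_interior_sub _ _ ext_group) in hz; [|exact ext_nbhd_one].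
    exists (ext_mul p (ext_inv (ext_mul z p))). split.
    + apply hpU, hmj, hz.
    + rewrite (invgM ext_group), (invgK ext_group), (mulgK ext_group). reflexivity.
Qed.

Definition embed0 (x : H) : extension := (x, 0).

Lemma ext_open_embed0_image U : gopen H U ->
  ext_open (fun p : H * R => (snd p = 0 /\ U (fst p)) \/ 0 < snd p).
Proof.
  intros hU [a t] ha; simpl in ha. destruct ha as [[-> ha] | ht].
  - exists (ExtIndex (fun z => U (mul a z)) (fun _ => True) 1). split.
    + repeat split; simpl; [apply (open_mull HT HM), hU | rewrite (mulg1 HG); exact ha
        | constructor | lra].
    + intros [c r]; unfold ext_nbhd, ext_mul; simpl.
      intros [[-> hc] | [hr _]]; [left; split; [ring | exact hc] | right; lra].
  - exists (ExtIndex (fun _ => True) (fun _ => True) 1). split.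
    + repeat split; simpl; [apply (open_setT HT) | constructor | lra].
    + intros [c r]; unfold ext_nbhd, ext_mul; simpl.
      intros [[-> _] | [hr _]]; right; lra.
Qed.

Lemma open_of_ext_open U V : ext_open V -> (forall x, U x <-> V (embed0 x)) -> gopen H U.
Proof.
  intros hV hUV. apply (open_of_nbhd HT). intros x hx. apply hUV in hx.
  destruct (hV _ hx) as [[U0 W t] [[hU0 [hU0e _]] hxV]]; simpl in *.
  exists (fun z => U0 (mul (inv x) z)).
  split; [apply (open_mull HT HM), hU0|]. split; [rewrite (mulVg HG); exact hU0e|].
  intros z hz. apply hUV.
  assert (hn : ext_nbhd (ExtIndex U0 W t) (mul (inv x) z, 0)) by (left; auto).
  pose proof (hxV _ hn) as hz'. unfold ext_mul in hz'; simpl in hz'.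
  rewrite (mulKVg HG), Rplus_0_l in hz'. exact hz'.
Qed.

Lemma embed0_embedding : embedding H extension embed0.
Proof.
  split; [|split].
  - intros x y. unfold embed0; simpl; unfold ext_mul; simpl. rewrite Rplus_0_l. reflexivity.
  - intros x y E. injection E. auto.
  - intro U. split.
    + intro hU. eexists. split; [apply ext_open_embed0_image, hU|].
      intro x; simpl. split; [auto|]. intros [[_ ?] | ?]; [assumption | lra].
    + intros [V [hV hUV]]. exact (open_of_ext_open U V hV hUV).
Qed.

Definition real_part_open : (H * R -> Prop) -> Prop := induced snd real_open.

Lemma real_part_group_topology : group_topology extension real_part_open.
Proof.
  split; [|split].
  - apply induced_topology, real_open_topology.
  - exact (induced_mul_continuous snd (mulA := ext_mul) (fun _ _ => eq_refl)
             real_open_plus_continuous).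
  - exact (induced_inv_continuous snd (invA := ext_inv) (fun _ => eq_refl)
             real_open_opp_continuous).
Qed.

Lemma real_part_open_sub : subset real_part_open ext_open.
Proof.
  intros S [V [hV hSV]] p hp. apply hSV in hp. destruct (hV _ hp) as [d [hd hdV]].
  exists (ExtIndex (fun _ => True) (fun _ => True) d). split.
  - repeat split; simpl; [apply (open_setT HT) | constructor | lra].
  - intros [c r] hn. apply hSV, hdV. unfold ext_mul; simpl.
    replace (snd p + r - snd p) with r by ring.
    destruct hn as [[hr _] | [hr _]]; simpl in hr; rewrite Rabs_right; lra.
Qed.

Lemma embed0_flat_closed : flat_closed extension (fun y => exists x, y = embed0 x).
Proof.
  apply (flat_open_of_group_topology _ _ real_part_group_topology real_part_open_sub).
  exists (fun r => r <> 0). split.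
  - intros r hr. exists (Rabs r). split; [apply Rabs_pos_lt, hr|].
    intros s hs E. subst s. rewrite Rminus_0_l, Rabs_Ropp in hs. lra.
  - intros [a t]; simpl. split.
    + intros hp E. apply hp. exists a. rewrite E. reflexivity.
    + intros ht [x E]. injection E as _ E. exact (ht E).
Qed.
End Extension.

Lemma saturated_closed_embedding_of_flat_separated (H : ParaTopGroup) :
  flat_separated H -> exists (G : ParaTopGroup) (f : H -> G),
    saturated G /\ embedding H G f /\ flat_closed G (fun y => exists x, y = f x).
Proof.
  intro hH. exists (extension H hH), (embed0 H hH).
  split; [apply extension_saturated|].
  split; [apply embed0_embedding | apply embed0_flat_closed].
Qed.

Theorem corollary3 (H : ParaTopGroup) :
  (flat_separated H <->
     exists (G : ParaTopGroup) (f : H -> G), saturated G /\ embedding H G f) /\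
  ((exists (G : ParaTopGroup) (f : H -> G), saturated G /\ embedding H G f) <->
     exists (G : ParaTopGroup) (f : H -> G),
       saturated G /\ embedding H G f /\ flat_closed G (fun y => exists x, y = f x)).
Proof.
  split; split.
  - intro hH.
    destruct (saturated_closed_embedding_of_flat_separated H hH) as [G [f [hG [hf _]]]].
    exists G, f. auto.
  - intros [G [f [hG hf]]]. exact (flat_separated_of_saturated_embedding H G f hG hf).
  - intros [G [f [hG hf]]]. apply saturated_closed_embedding_of_flat_separated.
    exact (flat_separated_of_saturated_embedding H G f hG hf).
  - intros [G [f [hG [hf _]]]]. exists G, f. auto.
Qed.
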